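(* Let $0<\rho_1<1$. There is $\epsilon_0\in(0,1)$ such that for every $0<\epsilon<\epsilon_0$ there is $q_0$ (depending on $\rho_1$ and $\epsilon$) such that the following holds for every prime $q\ge q_0$. Let $S\subseteq\mathbb{Z}/q\mathbb{Z}$ with $|S|\ge\rho_1 q$, and let $h$ be an integer with $1\le h\le q-1$ such that $S'=\{hs\bmod q : s\in S\}$ satisfies: for every integer $a$ with $|a|\le q/2$ and $|f_{S'}(a/q)|>\epsilon|S|$ one has $|a|<q^{1-\rho_1\epsilon^2}$. Let $k$ be an integer, $v$ an integer with $1\le v<q^{\rho_1\epsilon^2/4}$, and $W=W(k,v)$. Let $u$ be real with $5vq^{-\rho_1\epsilon^2}\le|u|\le\frac12$, and let $a$ be an integer with $|u-a/q|\le \frac{1}{2q}$. Then for all integers $N\ge 0$, $H\ge 1$ with $[N+1,N+H]\subseteq[0,q-1]$, $$\left|\sum_{s\in W,\ N+1\le s\le N+H} e\left(\frac{sa}{q}\right)\right|\ <\ 2|S|\left(\frac{\epsilon H}{\rho_1 q}\right)^{1/3}.$$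
   Context: $e(u)=\exp(2\pi i u)$. For a finite set of integers $T$ (subsets of $\mathbb{Z}/q\mathbb{Z}$ being identified with their least nonnegative residues in $\{0,\dots,q-1\}$), $f_T(t)=\sum_{s\in T}e(st)$. Given $S,h$ as in the claim, an integer $k$ and an integer $v$ with $1\le v<q^{\rho_1\epsilon^2/4}$, $W(k,v)\subseteq\{0,1,\dots,q-1\}$ is the set of least nonnegative residues modulo $q$ of the numbers $(4v)^{-1}hs+k$, $s\in S$, where $(4v)^{-1}$ denotes the inverse of $4v$ modulo $q$. *)

From Stdlib Require Import Reals ZArith List Znumtheory.
Import ListNotations.
Open Scope R_scope.

Definition zrange (m n : Z) : list Z :=
  map (fun i => (m + Z.of_nat i)%Z) (seq 0 (Z.to_nat (n - m + 1))).

(* |f_T(t)| = |sum_{s in T} e(s t)|, with e(x) = exp(2 pi i x) written via cos/sin *)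
Definition e_abs (T : list Z) (t : R) : R :=
  sqrt ((fold_right Rplus 0 (map (fun s => cos (2 * PI * IZR s * t)) T)) ^ 2
      + (fold_right Rplus 0 (map (fun s => sin (2 * PI * IZR s * t)) T)) ^ 2).

(* A subset of Z/qZ is represented by a boolean predicate on least
   nonnegative residues; its elements are the s in [0, q-1] with S s. *)
Definition setZ (q : Z) (S : Z -> bool) : list Z := filter S (zrange 0 (q - 1)).

Definition cardZ (q : Z) (S : Z -> bool) : Z := Z.of_nat (length (setZ q S)).

Definition dilate (q h : Z) (S : Z -> bool) : Z -> bool :=
  fun t => existsb (fun s => Z.eqb ((h * s) mod q) t) (setZ q S).

(* W(k,v) = { ((4v)^{-1} h s + k) mod q : s in S }, where winv is (a
   representative of) the inverse of 4v modulo q *)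
Definition Wset (q h k winv : Z) (S : Z -> bool) : Z -> bool :=
  fun t => existsb (fun s => Z.eqb ((winv * h * s + k) mod q) t) (setZ q S).

(* Write the sum as the sum of F(x) = 1_W(x) e(xa/q) over the interval I = [N+1, N+H] and
   compare it with its average over the shifts x |-> x + j, 0 <= j < L, at cost 2(L-1).
   By Fourier inversion on Z/qZ the average is (1/(Lq)) sum_b F^(b) D_I(b) D_L(b), with
   D_I, D_L geometric sums.  As W is an affine image of S, |F^(b)| = |f_S'(c/q)| for
   c = (4v)^(-1)(a+b) mod q; when this exceeds eps|S| the hypothesis on S' makes |c| < q/P
   (P = q^(rho1 eps^2)).  Then b = 4vc - a mod q, and the bounds on v and |u| keep
   (4vc - a)/q at distance >= 1/(2P) from Z, so that |D_I(b)| <= 4P/3.  The remaining b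
   are handled by AM-GM and Parseval, and L ~ X/2 with X = |S| (eps H/(rho1 q))^(1/3)
   balances the three error terms. *)

From Stdlib Require Import Reals ZArith List Znumtheory Lra Lia Psatz Permutation.
From Coquelicot Require Import Complex.
Import ListNotations.
Open Scope R_scope.

Definition e2pi (t : R) : C := (cos (2 * PI * t), sin (2 * PI * t)).

Lemma e2pi_add s t : e2pi (s + t) = (e2pi s * e2pi t)%C.
Proof.
  unfold e2pi, Cmult; simpl. rewrite Rmult_plus_distr_l, cos_plus, sin_plus.
  f_equal; ring.
Qed.

Lemma cos_sin_period_IZR x n :
  cos (x + 2 * PI * IZR n) = cos x /\ sin (x + 2 * PI * IZR n) = sin x.
Proof.
  destruct (Z_le_gt_dec 0 n) as [Hn|Hn].
  - rewrite <- (Z2Nat.id n Hn), <- INR_IZR_INZ.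
    replace (x + 2 * PI * INR (Z.to_nat n)) with (x + 2 * INR (Z.to_nat n) * PI) by ring.
    split; [apply cos_period | apply sin_period].
  - assert (Hx : x = (x + 2 * PI * IZR n) + 2 * INR (Z.to_nat (- n)) * PI).
    { rewrite INR_IZR_INZ, Z2Nat.id, opp_IZR by lia. ring. }
    rewrite Hx at 2 4. split; symmetry; [apply cos_period | apply sin_period].
Qed.

Lemma e2pi_IZR n : e2pi (IZR n) = 1%C.
Proof.
  unfold e2pi. destruct (cos_sin_period_IZR 0 n) as [Hc Hs].
  rewrite Rplus_0_l in Hc, Hs. rewrite Hc, Hs, cos_0, sin_0. reflexivity.
Qed.

Lemma Cmod_e2pi t : Cmod (e2pi t) = 1.
Proof.
  unfold Cmod, e2pi; simpl. rewrite !Rmult_1_r, <- sqrt_1. f_equal.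
  pose proof (sin2_cos2 (2 * PI * t)) as H. unfold Rsqr in H. lra.
Qed.

Lemma e2pi_opp t : e2pi (- t) = Cconj (e2pi t).
Proof.
  unfold e2pi, Cconj; simpl. rewrite <- Ropp_mult_distr_r, cos_neg, sin_neg. reflexivity.
Qed.

Lemma Cmod_e2pi_sub1_sqr t : Cmod (e2pi t - 1) ^ 2 = 2 - 2 * cos (2 * PI * t).
Proof.
  unfold Cmod, e2pi; simpl. rewrite !Rmult_1_r, sqrt_sqrt.
  - pose proof (sin2_cos2 (2 * PI * t)) as H. unfold Rsqr in H. nra.
  - apply Rplus_le_le_0_compat; apply Rle_0_sqr.
Qed.

Lemma PI_gt_3 : 3 < PI.
Proof. pose proof PI2_3_2. lra. Qed.

Lemma sin_ge_half x : 0 <= x <= 1 -> x / 2 <= sin x.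
Proof.
  intros Hx. pose proof PI_gt_3.
  destruct (SIN x) as [Hlb _]; try lra.
  unfold sin_lb, sin_approx, sin_term in Hlb; simpl in Hlb.
  assert (x * x <= 1) by nra.
  assert (0 <= x * x * x * x * x) by (repeat apply Rmult_le_pos; lra).
  nra.
Qed.

(* [2 - 2 cos(2 pi t)] is [4 sin^2 (pi t)], and [sin x >= x/2] on [0, 1]. *)
Lemma two_sub_two_cos_ge d t : 0 < d <= 1 / 6 -> d <= t <= 1 - d ->
  9 * d ^ 2 <= 2 - 2 * cos (2 * PI * t).
Proof.
  intros Hd Ht. pose proof PI_gt_3. pose proof PI_4.
  assert (Hc : cos (2 * PI * t) <= cos (2 * PI * d)).
  { destruct (Rle_dec t (1 / 2)).
    - apply cos_decr_1; nra.
    - replace (2 * PI * t) with (- (2 * PI * (1 - t)) + 2 * PI * IZR 1) by (simpl; ring).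
      rewrite (proj1 (cos_sin_period_IZR _ _)), cos_neg. apply cos_decr_1; nra. }
  replace (2 * PI * d) with (2 * (PI * d)) in Hc by ring.
  rewrite cos_2a_sin in Hc.
  assert (Hs : PI * d / 2 <= sin (PI * d)) by (apply sin_ge_half; nra).
  assert (PI * d / 2 * (PI * d / 2) <= sin (PI * d) * sin (PI * d)) by (apply Rmult_le_compat; nra).
  assert (9 * (d * d) <= PI * PI * (d * d)) by (apply Rmult_le_compat_r; nra).
  simpl. nra.
Qed.

Lemma Cmod_e2pi_sub1_ge d t : 0 < d <= 1 / 6 -> d <= Rabs t <= 1 - d ->
  3 * d <= Cmod (e2pi t - 1).
Proof.
  intros Hd Ht.
  assert (Hsq : 9 * d ^ 2 <= Cmod (e2pi t - 1) ^ 2).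
  { rewrite Cmod_e2pi_sub1_sqr. destruct (Rle_dec 0 t).
    - rewrite Rabs_right in Ht by lra. apply two_sub_two_cos_ge; lra.
    - rewrite Rabs_left in Ht by lra. rewrite <- cos_neg, Ropp_mult_distr_r.
      apply two_sub_two_cos_ge; lra. }
  pose proof (Cmod_ge_0 (e2pi t - 1)). nra.
Qed.

Definition csum (l : list Z) (f : Z -> C) : C := fold_right Cplus 0%C (map f l).
Definition rsum (l : list Z) (f : Z -> R) : R := fold_right Rplus 0 (map f l).

Lemma csum_cons x l f : csum (x :: l) f = (f x + csum l f)%C.
Proof. reflexivity. Qed.

Lemma rsum_cons x l f : rsum (x :: l) f = f x + rsum l f.
Proof. reflexivity. Qed.

Lemma csum_app l1 l2 f : csum (l1 ++ l2) f = (csum l1 f + csum l2 f)%C.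
Proof.
  induction l1 as [|x l1 IH]; simpl; [rewrite Cplus_0_l; auto|].
  rewrite !csum_cons, IH. ring.
Qed.

Lemma csum_ext l f g : (forall x, In x l -> f x = g x) -> csum l f = csum l g.
Proof.
  induction l as [|x l IH]; intros Hfg; auto.
  rewrite !csum_cons, Hfg, IH; [reflexivity | intros; apply Hfg | ]; simpl; auto.
Qed.

Lemma rsum_ext l f g : (forall x, In x l -> f x = g x) -> rsum l f = rsum l g.
Proof.
  induction l as [|x l IH]; intros Hfg; auto.
  rewrite !rsum_cons, Hfg, IH; [reflexivity | intros; apply Hfg | ]; simpl; auto.
Qed.

Lemma csum_scal l c f : csum l (fun x => c * f x)%C = (c * csum l f)%C.
Proof. induction l as [|x l IH]; [unfold csum; simpl; ring|]. rewrite !csum_cons, IH. ring. Qed.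

Lemma csum_scal_r l c f : csum l (fun x => f x * c)%C = (csum l f * c)%C.
Proof. rewrite Cmult_comm, <- csum_scal. apply csum_ext. intros; ring. Qed.

Lemma rsum_scal l c f : rsum l (fun x => c * f x) = c * rsum l f.
Proof. induction l as [|x l IH]; [unfold rsum; simpl; ring|]. rewrite !rsum_cons, IH. ring. Qed.

Lemma csum_add l f g : csum l (fun x => f x + g x)%C = (csum l f + csum l g)%C.
Proof. induction l as [|x l IH]; [unfold csum; simpl; ring|]. rewrite !csum_cons, IH. ring. Qed.

Lemma rsum_add l f g : rsum l (fun x => f x + g x) = rsum l f + rsum l g.
Proof. induction l as [|x l IH]; [unfold rsum; simpl; ring|]. rewrite !rsum_cons, IH. ring. Qed.

Lemma csum_const l c : csum l (fun _ => c) = (RtoC (INR (length l)) * c)%C.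
Proof.
  induction l as [|x l IH]; [unfold csum; simpl; ring|].
  rewrite csum_cons, IH. simpl length. rewrite S_INR, RtoC_plus. ring.
Qed.

Lemma rsum_const l c : rsum l (fun _ => c) = INR (length l) * c.
Proof.
  induction l as [|x l IH]; [unfold rsum; simpl; ring|].
  rewrite rsum_cons, IH. simpl length. rewrite S_INR. ring.
Qed.

Lemma csum_comm l1 l2 (f : Z -> Z -> C) :
  csum l1 (fun x => csum l2 (f x)) = csum l2 (fun y => csum l1 (fun x => f x y)).
Proof.
  induction l1 as [|x l1 IH]; simpl.
  - rewrite (csum_ext l2 _ (fun _ => 0%C)) by reflexivity.
    rewrite csum_const. unfold csum at 1; simpl; ring.
  - rewrite csum_cons, IH, <- csum_add. apply csum_ext. reflexivity.
Qed.

Lemma csum_mul l1 l2 f g :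
  (csum l1 f * csum l2 g)%C = csum l1 (fun x => csum l2 (fun y => f x * g y))%C.
Proof. rewrite <- csum_scal_r. apply csum_ext. intros. symmetry. apply csum_scal. Qed.

Lemma csum_perm l1 l2 f : Permutation l1 l2 -> csum l1 f = csum l2 f.
Proof.
  induction 1; auto.
  - rewrite !csum_cons; congruence.
  - rewrite !csum_cons; ring.
  - congruence.
Qed.

Lemma csum_filter P l f : csum (filter P l) f = csum l (fun x => if P x then f x else 0%C).
Proof.
  induction l as [|x l IH]; auto. simpl. rewrite (csum_cons x l).
  destruct (P x); rewrite ?csum_cons, IH; ring.
Qed.

Lemma csum_map g l f : csum (map g l) f = csum l (fun x => f (g x)).
Proof. unfold csum. rewrite map_map. reflexivity. Qed.

Lemma Cconj_csum l f : Cconj (csum l f) = csum l (fun x => Cconj (f x)).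
Proof.
  induction l as [|x l IH].
  - unfold csum; simpl. apply injective_projections; simpl; ring.
  - rewrite !csum_cons, Cplus_conj, IH. reflexivity.
Qed.

Lemma RtoC_rsum l f : RtoC (rsum l f) = csum l (fun x => RtoC (f x)).
Proof.
  induction l as [|x l IH]; auto.
  rewrite rsum_cons, csum_cons, <- IH, RtoC_plus. reflexivity.
Qed.

Lemma Cmod_csum_le l f : Cmod (csum l f) <= rsum l (fun x => Cmod (f x)).
Proof.
  induction l as [|x l IH]; [unfold csum, rsum; simpl; rewrite Cmod_0; lra|].
  rewrite csum_cons, rsum_cons. eapply Rle_trans; [apply Cmod_triangle|]. lra.
Qed.

Lemma rsum_le l f g : (forall x, In x l -> f x <= g x) -> rsum l f <= rsum l g.
Proof.
  induction l as [|x l IH]; intros Hfg; [unfold rsum; simpl; lra|].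
  rewrite !rsum_cons. apply Rplus_le_compat; [apply Hfg; simpl; auto|].
  apply IH. intros; apply Hfg; simpl; auto.
Qed.

Lemma csum_indicator l z (P : Z -> bool) g : NoDup l -> In z l ->
  (forall y, In y l -> P y = true <-> y = z) ->
  csum l (fun y => if P y then g y else 0%C) = g z.
Proof.
  induction l as [|x l IH]; intros Hnd Hin HP; [destruct Hin|].
  inversion Hnd as [|? ? Hx Hnd']; subst. rewrite csum_cons.
  destruct Hin as [<-|Hin].
  - rewrite (proj2 (HP x (or_introl eq_refl)) eq_refl).
    rewrite (csum_ext _ _ (fun _ => 0%C)), csum_const; [ring|].
    intros y Hy. destruct (P y) eqn:E; auto.
    apply HP in E; [subst; contradiction | simpl; auto].
  - assert (P x = false) as ->.
    { destruct (P x) eqn:E; auto. apply HP in E; [subst; contradiction | simpl; auto]. }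
    rewrite IH; auto; [ring|]. intros; apply HP; simpl; auto.
Qed.

Lemma fst_csum l f : fst (csum l f) = rsum l (fun x => fst (f x)).
Proof. induction l; auto. rewrite csum_cons, rsum_cons, <- IHl. reflexivity. Qed.

Lemma snd_csum l f : snd (csum l f) = rsum l (fun x => snd (f x)).
Proof. induction l; auto. rewrite csum_cons, rsum_cons, <- IHl. reflexivity. Qed.

Lemma zrange_In m n x : In x (zrange m n) <-> (m <= x <= n)%Z.
Proof.
  unfold zrange. rewrite in_map_iff. split.
  - intros [i [<- Hi]]. apply in_seq in Hi. lia.
  - intros H. exists (Z.to_nat (x - m)). split; [lia|]. apply in_seq. lia.
Qed.

Lemma zrange_NoDup m n : NoDup (zrange m n).
Proof. apply FinFun.Injective_map_NoDup; [intros i j H; lia | apply seq_NoDup]. Qed.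

Lemma zrange_length m n : length (zrange m n) = Z.to_nat (n - m + 1).
Proof. unfold zrange. rewrite length_map, length_seq. reflexivity. Qed.

Lemma INR_length_zrange m n : (m <= n + 1)%Z -> INR (length (zrange m n)) = IZR (n - m + 1).
Proof. intros. rewrite zrange_length, INR_IZR_INZ, Z2Nat.id by lia. reflexivity. Qed.

Lemma zrange_nil m n : (n < m)%Z -> zrange m n = [].
Proof. intros. unfold zrange. replace (Z.to_nat (n - m + 1)) with 0%nat by lia. reflexivity. Qed.

Lemma zrange_cons m n : (m <= n)%Z -> zrange m n = m :: zrange (m + 1) n.
Proof.
  intros H. unfold zrange.
  replace (Z.to_nat (n - m + 1)) with (S (Z.to_nat (n - (m + 1) + 1))) by lia.
  rewrite <- cons_seq. simpl. f_equal; [lia|].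
  rewrite <- seq_shift, map_map. apply map_ext. intros. lia.
Qed.

Lemma zrange_rcons m n : (m <= n + 1)%Z -> zrange m (n + 1) = zrange m n ++ [n + 1]%Z.
Proof.
  intros H. unfold zrange.
  replace (Z.to_nat (n + 1 - m + 1)) with (S (Z.to_nat (n - m + 1))) by lia.
  rewrite seq_S, map_app. simpl. f_equal. f_equal. lia.
Qed.

Lemma csum_zrange_shift m n j f :
  csum (zrange m n) (fun x => f (x + j)%Z) = csum (zrange (m + j) (n + j)) f.
Proof.
  unfold zrange, csum. rewrite !map_map.
  replace (n + j - (m + j) + 1)%Z with (n - m + 1)%Z by lia.
  f_equal. apply map_ext. intros. f_equal. lia.
Qed.

Lemma zrange_congr_inj q m n x y : (n - m < q)%Z ->
  In x (zrange m n) -> In y (zrange m n) -> ((x - y) mod q = 0)%Z -> x = y.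
Proof.
  intros Hmn Hx Hy H. apply zrange_In in Hx, Hy.
  apply Z.mod_divide in H; [|lia]. destruct H as [k Hk].
  destruct (Z.lt_trichotomy k 0) as [Hk0|[Hk0|Hk0]]; [nia | subst; lia | nia].
Qed.

Definition emod (q u : Z) : C := e2pi (IZR u / IZR q).

Lemma emod_add q u v : emod q (u + v) = (emod q u * emod q v)%C.
Proof. unfold emod. rewrite <- e2pi_add, plus_IZR. f_equal. unfold Rdiv. ring. Qed.

Lemma emod_opp q u : emod q (- u) = Cconj (emod q u).
Proof. unfold emod. rewrite <- e2pi_opp, opp_IZR. f_equal. unfold Rdiv. ring. Qed.

Lemma Cmod_emod q u : Cmod (emod q u) = 1.
Proof. apply Cmod_e2pi. Qed.

Lemma emod_0 q : emod q 0 = 1%C.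
Proof. unfold emod, Rdiv. rewrite Rmult_0_l. exact (e2pi_IZR 0). Qed.

Lemma emod_congr q u u' : (q <> 0)%Z -> ((u - u') mod q = 0)%Z -> emod q u = emod q u'.
Proof.
  intros Hq H. apply Z.mod_divide in H as [k Hk]; [|auto].
  replace u with (u' + k * q)%Z by lia.
  unfold emod. rewrite plus_IZR, mult_IZR.
  replace ((IZR u' + IZR k * IZR q) / IZR q) with (IZR u' / IZR q + IZR k)
    by (field; apply not_0_IZR; auto).
  rewrite e2pi_add, e2pi_IZR. apply Cmult_1_r.
Qed.

Lemma emod_mod q u : (q <> 0)%Z -> emod q (u mod q) = emod q u.
Proof.
  intros Hq. apply emod_congr; auto.
  rewrite Zminus_mod, Z.mod_mod, Z.sub_diag by auto. reflexivity.
Qed.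

Lemma emod_geom q m x0 (K : nat) :
  ((emod q m - 1) * csum (zrange x0 (x0 + Z.of_nat K - 1)) (fun x => emod q (x * m)))%C
  = (emod q ((x0 + Z.of_nat K) * m) - emod q (x0 * m))%C.
Proof.
  induction K as [|K IH].
  - rewrite zrange_nil by lia. replace (x0 + Z.of_nat 0)%Z with x0 by lia.
    unfold csum; simpl; ring.
  - replace (x0 + Z.of_nat (S K) - 1)%Z with ((x0 + Z.of_nat K - 1) + 1)%Z by lia.
    rewrite zrange_rcons, csum_app, Cmult_plus_distr_l, IH by lia.
    replace (x0 + Z.of_nat K - 1 + 1)%Z with (x0 + Z.of_nat K)%Z by lia.
    replace ((x0 + Z.of_nat (S K)) * m)%Z with (m + (x0 + Z.of_nat K) * m)%Z by lia.
    rewrite emod_add. unfold csum; simpl; ring.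
Qed.

Lemma emod_neq_1 q m : (6 <= q)%Z -> (m mod q <> 0)%Z -> emod q m <> 1%C.
Proof.
  intros Hq Hm Hc. assert (Hq' : 6 <= IZR q) by (apply IZR_le; lia).
  pose proof (Z.mod_pos_bound m q ltac:(lia)) as Hr.
  assert (1 <= IZR (m mod q) <= IZR q - 1) by (rewrite <- minus_IZR; split; apply IZR_le; lia).
  pose proof (Cmod_e2pi_sub1_ge (/ IZR q) (IZR (m mod q) / IZR q)) as Hb.
  fold (emod q (m mod q)) in Hb.
  rewrite emod_mod, Hc in Hb by lia.
  rewrite <- RtoC_minus, Rminus_diag, Cmod_0 in Hb.
  assert (0 < / IZR q) by (apply Rinv_0_lt_compat; lra).
  enough (3 * / IZR q <= 0) by lra.
  rewrite Rabs_right in Hb by (apply Rle_ge; unfold Rdiv; apply Rmult_le_pos; lra).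
  apply Hb; split; try lra; apply (Rmult_le_reg_l (IZR q)); try lra; field_simplify; lra.
Qed.

Lemma csum_emod_orth q m : (6 <= q)%Z ->
  csum (zrange 0 (q - 1)) (fun b => emod q (b * m)) =
  if (m mod q =? 0)%Z then RtoC (IZR q) else 0%C.
Proof.
  intros Hq. destruct (Z.eqb_spec (m mod q) 0) as [H0|H0].
  - rewrite (csum_ext _ _ (fun _ => 1%C)).
    + rewrite csum_const, INR_length_zrange by lia. replace (q - 1 - 0 + 1)%Z with q by ring. ring.
    + intros b _. rewrite <- emod_mod, Z.mul_mod, H0, Z.mul_0_r, Z.mod_0_l by lia.
      apply emod_0.
  - pose proof (emod_geom q m 0 (Z.to_nat q)) as G.
    replace (0 + Z.of_nat (Z.to_nat q) - 1)%Z with (q - 1)%Z in G by lia.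
    rewrite (emod_congr q ((0 + Z.of_nat (Z.to_nat q)) * m) (0 * m)) in G.
    + assert (Hne : (emod q m - 1)%C <> 0%C) by (apply Cminus_eq_contra, emod_neq_1; auto).
      set (s := csum _ _) in *.
      replace s with (/ (emod q m - 1) * ((emod q m - 1) * s))%C by (field; auto).
      rewrite G. ring.
    + lia.
    + replace ((0 + Z.of_nat (Z.to_nat q)) * m - 0 * m)%Z with (m * q)%Z by lia.
      apply Z_mod_mult.
Qed.

Lemma parseval q l c : (6 <= q)%Z -> NoDup l ->
  (forall x y, In x l -> In y l -> ((x - y) mod q = 0)%Z -> x = y) ->
  rsum (zrange 0 (q - 1)) (fun b => Cmod (csum l (fun x => c x * emod q (b * x))%C) ^ 2)
  = IZR q * rsum l (fun x => Cmod (c x) ^ 2).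
Proof.
  intros Hq Hnd Hl. apply RtoC_inj. rewrite RtoC_rsum, RtoC_mult, RtoC_rsum.
  rewrite (csum_ext _ _ (fun b => csum l (fun x => csum l (fun y =>
      c x * Cconj (c y) * emod q (b * (x - y))))))%C.
  2:{ intros b _. rewrite Cmod2_conj, Cconj_csum, csum_mul. apply csum_ext. intros x _.
      apply csum_ext. intros y _. rewrite Cmult_conj, <- emod_opp.
      replace (b * (x - y))%Z with (b * x + - (b * y))%Z by ring. rewrite emod_add. ring. }
  rewrite csum_comm, <- csum_scal. apply csum_ext. intros x Hx.
  rewrite csum_comm.
  rewrite (csum_ext _ _ (fun y => if ((x - y) mod q =? 0)%Z
                                  then (c x * Cconj (c y) * IZR q)%C else 0%C)).
  - rewrite (csum_indicator l x), Cmod2_conj; auto; [ring|].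
    intros y Hy. rewrite Z.eqb_eq. split; intros H.
    + symmetry; apply Hl; auto.
    + subst. rewrite Z.sub_diag. apply Z.mod_0_l. lia.
  - intros y _. rewrite csum_scal, csum_emod_orth by auto. destruct (_ =? _)%Z; ring.
Qed.

Definition fourier (q : Z) (F : Z -> C) (b : Z) : C :=
  csum (zrange 0 (q - 1)) (fun y => F y * emod q (b * y))%C.

Lemma fourier_inversion q F z : (6 <= q)%Z -> (forall y, F y = F (y mod q)) ->
  F z = (/ IZR q * csum (zrange 0 (q - 1)) (fun b => fourier q F b * emod q (- (b * z))))%C.
Proof.
  intros Hq HF. unfold fourier.
  rewrite (csum_ext _ _ (fun b => csum (zrange 0 (q - 1))
                                    (fun y => F y * emod q (b * (y - z)))))%C.
  2:{ intros b _. rewrite <- csum_scal_r. apply csum_ext. intros y _.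
      rewrite <- Cmult_assoc, <- emod_add. do 2 f_equal. ring. }
  rewrite csum_comm.
  rewrite (csum_ext _ _ (fun y => if ((y - z) mod q =? 0)%Z then (F y * IZR q)%C else 0%C)).
  - pose proof (Z.mod_pos_bound z q ltac:(lia)) as Hz.
    rewrite (csum_indicator _ (z mod q)), <- HF.
    + field. intro H. apply RtoC_inj in H. apply (not_0_IZR q); [lia | auto].
    + apply zrange_NoDup.
    + apply zrange_In. lia.
    + intros y Hy. apply zrange_In in Hy. rewrite Z.eqb_eq.
      rewrite <- Z.cong_iff_0, (Z.mod_small y) by lia. split; auto.
  - intros y _. rewrite csum_scal, csum_emod_orth by auto. destruct (_ =? _)%Z; ring.
Qed.

Lemma sum_sqr_fourier_le q F : (6 <= q)%Z -> (forall y, Cmod (F y) <= 1) ->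
  rsum (zrange 0 (q - 1)) (fun b => Cmod (fourier q F b) ^ 2) <= IZR q * IZR q.
Proof.
  intros Hq HF. unfold fourier.
  rewrite parseval; auto using zrange_NoDup.
  2:{ intros x y. apply zrange_congr_inj. lia. }
  apply Rmult_le_compat_l; [apply IZR_le; lia|].
  eapply Rle_trans; [apply (rsum_le _ _ (fun _ => 1))|].
  - intros y _. pose proof (HF y). pose proof (Cmod_ge_0 (F y)). simpl. nra.
  - rewrite rsum_const, INR_length_zrange by lia. replace (q - 1 - 0 + 1)%Z with q by ring. lra.
Qed.

Definition geom_sum (q m n b : Z) : C := csum (zrange m n) (fun x => emod q (- (b * x))).

Lemma sum_sqr_geom_sum q m n : (6 <= q)%Z -> (m <= n + 1)%Z -> (n - m < q)%Z ->
  rsum (zrange 0 (q - 1)) (fun b => Cmod (geom_sum q m n b) ^ 2) = IZR q * IZR (n - m + 1).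
Proof.
  intros Hq Hmn Hn.
  rewrite (rsum_ext _ _ (fun b => Cmod (csum (zrange m n) (fun x => 1 * emod q (b * x)))%C ^ 2)).
  2:{ intros b _. unfold geom_sum. rewrite <- Cmod_conj, Cconj_csum. do 2 f_equal.
      apply csum_ext. intros. rewrite emod_opp, Cconj_conj. ring. }
  rewrite parseval; auto using zrange_NoDup.
  2:{ intros x y. apply zrange_congr_inj. lia. }
  rewrite rsum_const, Cmod_1, INR_length_zrange by lia. ring.
Qed.

Lemma Cmod_geom_sum_le q m n b c d : (6 <= q)%Z -> (m <= n + 1)%Z ->
  ((b - c) mod q = 0)%Z -> 0 < d <= 1 / 6 -> d <= Rabs (IZR c / IZR q) <= 1 - d ->
  Cmod (geom_sum q m n b) <= 2 / (3 * d).
Proof.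
  intros Hq Hmn Hbc Hd Hc.
  pose proof (emod_geom q (- b) m (Z.to_nat (n - m + 1))) as G.
  rewrite Z2Nat.id in G by lia.
  replace (m + (n - m + 1) - 1)%Z with n in G by ring.
  rewrite (csum_ext _ _ (fun x => emod q (- (b * x)))) in G by (intros; f_equal; ring).
  fold (geom_sum q m n b) in G.
  assert (Hlow : 3 * d <= Cmod (emod q (- b) - 1)).
  { rewrite (emod_congr q (- b) (- c)).
    - apply Cmod_e2pi_sub1_ge; auto.
      rewrite opp_IZR, Rdiv_opp_l, Rabs_Ropp. auto.
    - lia.
    - replace (- b - - c)%Z with (- (b - c))%Z by ring. rewrite Z.mod_opp_l_z; lia. }
  assert (Hup : Cmod (emod q ((m + (n - m + 1)) * - b) - emod q (m * - b)) <= 2).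
  { unfold Cminus. eapply Rle_trans; [apply Cmod_triangle|].
    rewrite Cmod_opp, !Cmod_emod. lra. }
  rewrite <- G, Cmod_mult in Hup.
  pose proof (Cmod_ge_0 (geom_sum q m n b)).
  apply (Rmult_le_reg_l (3 * d)); [lra|].
  replace (3 * d * (2 / (3 * d))) with 2 by (field; lra). nra.
Qed.

Lemma csum_sub_shift1 F m n : (m <= n)%Z ->
  (csum (zrange m n) F - csum (zrange m n) (fun x => F (x + 1)%Z))%C = (F m - F (n + 1)%Z)%C.
Proof.
  intros Hmn. rewrite csum_zrange_shift, zrange_rcons, (zrange_cons m n), csum_app by lia.
  rewrite csum_cons. unfold csum at 3; simpl. ring.
Qed.

Lemma Cmod_csum_sub_shift_le F m n j : (forall y, Cmod (F y) <= 1) -> (m <= n)%Z ->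
  (0 <= j)%Z ->
  Cmod (csum (zrange m n) F - csum (zrange m n) (fun x => F (x + j)%Z)) <= 2 * IZR j.
Proof.
  intros HF Hmn Hj. rewrite <- (Z2Nat.id j Hj). induction (Z.to_nat j) as [|i IH].
  - rewrite (csum_ext _ (fun x => F (x + Z.of_nat 0)%Z) F) by (intros; f_equal; lia).
    replace (_ - _)%C with (RtoC 0) by ring. rewrite Cmod_0. simpl. lra.
  - set (G := fun y => F (y + Z.of_nat i)%Z).
    replace (csum (zrange m n) F - csum (zrange m n) (fun x => F (x + Z.of_nat (S i))%Z))%C
      with ((csum (zrange m n) F - csum (zrange m n) G)
            + (csum (zrange m n) G - csum (zrange m n) (fun x => G (x + 1)%Z)))%C.
    2:{ rewrite (csum_ext _ (fun x => G (x + 1)%Z) (fun x => F (x + Z.of_nat (S i))%Z))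
          by (intros; unfold G; f_equal; lia). ring. }
    rewrite csum_sub_shift1, Nat2Z.inj_succ, succ_IZR by auto.
    eapply Rle_trans; [apply Cmod_triangle|].
    unfold Cminus in *. pose proof (Cmod_triangle (G m) (- G (n + 1)%Z)).
    rewrite Cmod_opp in *.
    pose proof (HF (m + Z.of_nat i)%Z). pose proof (HF (n + 1 + Z.of_nat i)%Z).
    unfold G in *. lra.
Qed.

Definition shift_average (F : Z -> C) (m n L : Z) : C :=
  (/ IZR L * csum (zrange 0 (L - 1)) (fun j => csum (zrange m n) (fun x => F (x + j)%Z)))%C.

Lemma Cmod_sub_shift_average_le F m n L : (forall y, Cmod (F y) <= 1) -> (m <= n)%Z ->
  (1 <= L)%Z -> Cmod (csum (zrange m n) F - shift_average F m n L) <= 2 * (IZR L - 1).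
Proof.
  intros HF Hmn HL. unfold shift_average.
  assert (HL' : 1 <= IZR L) by (apply IZR_le; lia).
  assert (Hlen : INR (length (zrange 0 (L - 1))) = IZR L)
    by (rewrite INR_length_zrange by lia; f_equal; ring).
  set (T := csum (zrange m n) F).
  replace (T - / IZR L * csum (zrange 0 (L - 1))
                              (fun j => csum (zrange m n) (fun x => F (x + j)%Z)))%C
    with (RtoC (/ IZR L) * csum (zrange 0 (L - 1))
                             (fun j => T - csum (zrange m n) (fun x => F (x + j)%Z)))%C.
  2:{ unfold Cminus. rewrite csum_add, csum_const, Hlen.
      rewrite (csum_ext _ (fun j => - csum (zrange m n) (fun x => F (x + j)%Z))%C
                 (fun j => (-1) * csum (zrange m n) (fun x => F (x + j)%Z))%C) by (intros; ring).
      rewrite csum_scal, RtoC_inv by lra. field. intro Hc. apply RtoC_inj in Hc. lra. }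
  rewrite Cmod_mult, Cmod_R, Rabs_right by (apply Rle_ge, Rlt_le, Rinv_0_lt_compat; lra).
  apply (Rmult_le_reg_l (IZR L)); [lra|].
  rewrite <- Rmult_assoc, Rinv_r, Rmult_1_l by lra.
  eapply Rle_trans; [apply Cmod_csum_le|].
  eapply Rle_trans; [apply (rsum_le _ _ (fun _ => 2 * (IZR L - 1)))|].
  - intros j Hj. apply zrange_In in Hj.
    eapply Rle_trans; [apply Cmod_csum_sub_shift_le; auto; lia|].
    assert (IZR j <= IZR L - 1) by (rewrite <- minus_IZR; apply IZR_le; lia). lra.
  - rewrite rsum_const, Hlen. nra.
Qed.

Lemma shift_average_fourier q F m n L : (6 <= q)%Z -> (forall y, F y = F (y mod q)) ->
  (1 <= L)%Z ->
  shift_average F m n L = (/ IZR L * / IZR q *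
    csum (zrange 0 (q - 1)) (fun b => fourier q F b * geom_sum q m n b * geom_sum q 0 (L - 1) b))%C.
Proof.
  intros Hq HF HL. unfold shift_average. rewrite <- Cmult_assoc. f_equal.
  rewrite (csum_ext _ _ (fun j => / IZR q * csum (zrange m n) (fun x =>
      csum (zrange 0 (q - 1)) (fun b =>
        fourier q F b * (emod q (- (b * x)) * emod q (- (b * j))))))%C).
  2:{ intros j _. rewrite <- csum_scal. apply csum_ext. intros x _.
      rewrite (fourier_inversion q F (x + j)) by auto. f_equal. apply csum_ext. intros b _.
      rewrite <- emod_add. do 2 f_equal. ring. }
  rewrite csum_scal. f_equal.
  rewrite (csum_ext _ _ (fun j => csum (zrange 0 (q - 1)) (fun b => csum (zrange m n) (fun x =>
      fourier q F b * (emod q (- (b * x)) * emod q (- (b * j)))))))%C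
    by (intros; apply csum_comm).
  rewrite csum_comm. apply csum_ext. intros b _.
  unfold geom_sum. rewrite <- Cmult_assoc, csum_mul, <- csum_scal, csum_comm.
  apply csum_ext. intros x _. apply csum_scal.
Qed.

Lemma amgm_weighted y z lam : 0 < lam -> y * z <= (lam * y ^ 2 + / lam * z ^ 2) / 2.
Proof.
  intros Hlam.
  assert (0 <= / lam * (lam * y - z) ^ 2)
    by (apply Rmult_le_pos; [apply Rlt_le, Rinv_0_lt_compat; lra | apply pow2_ge_0]).
  replace ((lam * y ^ 2 + / lam * z ^ 2) / 2) with (y * z + / lam * (lam * y - z) ^ 2 / 2)
    by (field; lra).
  lra.
Qed.

(* If [x <= tau], use AM-GM on [tau y z]; otherwise [x y z <= x K L <= (K L / tau) x^2]. *)
Lemma split_large_small x y z tau K L lam :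
  0 <= x -> 0 <= y -> 0 <= z <= L -> 0 < tau -> 0 <= K -> 0 < lam ->
  (tau < x -> y <= K) ->
  x * y * z <= tau / 2 * (lam * y ^ 2 + / lam * z ^ 2) + K * L / tau * x ^ 2.
Proof.
  intros Hx Hy Hz Htau HK Hlam HyK.
  pose proof (amgm_weighted y z lam Hlam).
  assert (tau * (y * z) <= tau / 2 * (lam * y ^ 2 + / lam * z ^ 2)).
  { replace (tau / 2 * _) with (tau * ((lam * y ^ 2 + / lam * z ^ 2) / 2)) by (field; lra).
    apply Rmult_le_compat_l; lra. }
  assert (HKL : 0 <= K * L / tau)
    by (apply Rmult_le_pos; [nra | apply Rlt_le, Rinv_0_lt_compat; lra]).
  destruct (Rle_dec x tau) as [Hsmall|Hlarge].
  - assert (0 <= K * L / tau * x ^ 2) by (apply Rmult_le_pos; nra).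
    assert (x * (y * z) <= tau * (y * z)) by (apply Rmult_le_compat_r; nra). nra.
  - apply Rnot_le_lt in Hlarge. specialize (HyK Hlarge).
    replace (K * L / tau * x ^ 2) with (x * K * L * (x / tau)) by (field; lra).
    assert (1 <= x / tau) by (apply (Rmult_le_reg_r tau); [lra|]; field_simplify; lra).
    assert (x * y * z <= x * K * L) by (rewrite !Rmult_assoc; apply Rmult_le_compat_l; nra).
    assert (x * K * L * 1 <= x * K * L * (x / tau))
      by (apply Rmult_le_compat_l; [apply Rmult_le_pos; nra | lra]).
    assert (0 <= tau * (y * z)) by (apply Rmult_le_pos; nra).
    lra.
Qed.

Section ShortIntervalSum.

Variables (q : Z) (F : Z -> C) (m n L : Z) (tau K lam : R).
Hypothesis Hq : (6 <= q)%Z.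
Hypothesis F_periodic : forall y, F y = F (y mod q).
Hypothesis F_bounded : forall y, Cmod (F y) <= 1.
Hypothesis Hmn : (m <= n < m + q)%Z.
Hypothesis HL : (1 <= L <= q)%Z.
Hypotheses (Htau : 0 < tau) (HK : 0 <= K) (Hlam : 0 < lam).
Hypothesis large_coeff_geom_sum : forall b, (0 <= b <= q - 1)%Z ->
  tau < Cmod (fourier q F b) -> Cmod (geom_sum q m n b) <= K.

Lemma Cmod_geom_sum_zrange_le b : Cmod (geom_sum q 0 (L - 1) b) <= IZR L.
Proof.
  unfold geom_sum. eapply Rle_trans; [apply Cmod_csum_le|].
  rewrite (rsum_ext _ _ (fun _ => 1)) by (intros; apply Cmod_emod).
  rewrite rsum_const, INR_length_zrange by lia. replace (L - 1 - 0 + 1)%Z with L by ring. lra.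
Qed.

Lemma Cmod_shift_average_le :
  Cmod (shift_average F m n L) <=
    tau * (lam * IZR (n - m + 1) + IZR L / lam) / (2 * IZR L) + K * IZR q / tau.
Proof.
  assert (Hq' : 6 <= IZR q) by (apply IZR_le; lia).
  assert (HL' : 1 <= IZR L) by (apply IZR_le; lia).
  assert (Hc : 0 < / IZR L * / IZR q) by (apply Rmult_lt_0_compat; apply Rinv_0_lt_compat; lra).
  rewrite (shift_average_fourier q) by (auto; lia).
  rewrite <- RtoC_inv, <- RtoC_inv, <- RtoC_mult, Cmod_mult, Cmod_R, Rabs_right by lra.
  eapply Rle_trans; [apply Rmult_le_compat_l; [lra | apply Cmod_csum_le]|].
  eapply Rle_trans; [apply Rmult_le_compat_l; [lra|]; apply (rsum_le _ _ (fun b =>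
      tau / 2 * (lam * Cmod (geom_sum q m n b) ^ 2 + / lam * Cmod (geom_sum q 0 (L - 1) b) ^ 2)
      + K * IZR L / tau * Cmod (fourier q F b) ^ 2))|].
  - intros b Hb. apply zrange_In in Hb. rewrite !Cmod_mult.
    apply split_large_small; auto using Cmod_ge_0.
    split; [apply Cmod_ge_0 | apply Cmod_geom_sum_zrange_le].
  - rewrite rsum_add, !rsum_scal, rsum_add, !rsum_scal.
    rewrite !sum_sqr_geom_sum by lia. replace (L - 1 - 0 + 1)%Z with L by ring.
    pose proof (sum_sqr_fourier_le q F Hq F_bounded).
    assert (HKL : 0 <= K * IZR L / tau)
      by (apply Rmult_le_pos; [nra | apply Rlt_le, Rinv_0_lt_compat; lra]).
    apply (Rle_trans _ (/ IZR L * / IZR q * (tau / 2 * (lam * (IZR q * IZR (n - m + 1))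
      + / lam * (IZR q * IZR L)) + K * IZR L / tau * (IZR q * IZR q)))).
    + apply Rmult_le_compat_l; [lra|]. apply Rplus_le_compat_l, Rmult_le_compat_l; auto.
    + right. field. lra.
Qed.

Lemma Cmod_csum_short_interval_le :
  Cmod (csum (zrange m n) F) <=
    2 * (IZR L - 1) + tau * (lam * IZR (n - m + 1) + IZR L / lam) / (2 * IZR L)
    + K * IZR q / tau.
Proof.
  replace (csum (zrange m n) F) with ((csum (zrange m n) F - shift_average F m n L)
                                      + shift_average F m n L)%C by ring.
  eapply Rle_trans; [apply Cmod_triangle|].
  pose proof (Cmod_sub_shift_average_le F m n L F_bounded ltac:(lia) ltac:(lia)).
  pose proof Cmod_shift_average_le. lra.
Qed.

End ShortIntervalSum.

Lemma e_abs_csum T q a : e_abs T (IZR a / IZR q) = Cmod (csum T (fun s => emod q (s * a))).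
Proof.
  unfold e_abs, Cmod. rewrite fst_csum, snd_csum. unfold rsum, emod, e2pi. simpl.
  assert (Harg : forall s, 2 * PI * IZR s * (IZR a / IZR q) = 2 * PI * (IZR (s * a) / IZR q))
    by (intros; rewrite mult_IZR; unfold Rdiv; ring).
  rewrite (map_ext (fun s => cos (2 * PI * IZR s * (IZR a / IZR q)))
                   (fun s => cos (2 * PI * (IZR (s * a) / IZR q))))
    by (intros; rewrite Harg; reflexivity).
  rewrite (map_ext (fun s => sin (2 * PI * IZR s * (IZR a / IZR q)))
                   (fun s => sin (2 * PI * (IZR (s * a) / IZR q))))
    by (intros; rewrite Harg; reflexivity).
  reflexivity.
Qed.

Lemma setZ_In q S x : In x (setZ q S) <-> (0 <= x <= q - 1)%Z /\ S x = true.
Proof. unfold setZ. rewrite filter_In, zrange_In. tauto. Qed.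

Lemma setZ_NoDup q S : NoDup (setZ q S).
Proof. apply NoDup_filter, zrange_NoDup. Qed.

Lemma csum_image q l g f : NoDup l ->
  (forall x, In x l -> (0 <= g x <= q - 1)%Z) ->
  (forall x y, In x l -> In y l -> g x = g y -> x = y) ->
  csum (filter (fun t => existsb (fun s => Z.eqb (g s) t) l) (zrange 0 (q - 1))) f
  = csum l (fun s => f (g s)).
Proof.
  intros Hnd Hr Hinj. rewrite <- (csum_map g l f). apply csum_perm, NoDup_Permutation.
  - apply NoDup_filter, zrange_NoDup.
  - apply NoDup_map_NoDup_ForallPairs; [|auto]. intros x y Hx Hy. apply Hinj; auto.
  - intros t. rewrite filter_In, in_map_iff, existsb_exists, zrange_In. split.
    + intros [_ [s [Hs Hst]]]. exists s. split; auto. apply Z.eqb_eq; auto.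
    + intros [s [<- Hs]]. split; auto. exists s. split; auto. apply Z.eqb_eq; auto.
Qed.

Lemma affine_mod_inj q c k x y : prime q -> ~ (q | c)%Z ->
  (0 <= x <= q - 1)%Z -> (0 <= y <= q - 1)%Z ->
  ((c * x + k) mod q = (c * y + k) mod q)%Z -> x = y.
Proof.
  intros Hp Hc Hx Hy H. pose proof (prime_ge_2 q Hp).
  apply Z.cong_iff_0 in H. replace (c * x + k - (c * y + k))%Z with (c * (x - y))%Z in H by ring.
  apply Z.mod_divide in H; [|lia].
  apply prime_mult in H as [H|[j Hj]]; auto; [contradiction|].
  destruct (Z.lt_trichotomy j 0) as [Hk0|[Hk0|Hk0]]; [nia | subst; lia | nia].
Qed.

Lemma csum_affine_image q c k S f : prime q -> ~ (q | c)%Z ->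
  csum (filter (fun t => existsb (fun s => Z.eqb ((c * s + k) mod q) t) (setZ q S))
               (zrange 0 (q - 1))) f
  = csum (setZ q S) (fun s => f ((c * s + k) mod q)%Z).
Proof.
  intros Hp Hc. pose proof (prime_ge_2 q Hp). apply csum_image.
  - apply setZ_NoDup.
  - intros x _. pose proof (Z.mod_pos_bound (c * x + k) q). lia.
  - intros x y Hx Hy. apply setZ_In in Hx, Hy. apply affine_mod_inj; tauto.
Qed.

Lemma not_prime_divide_between q h : (1 <= h <= q - 1)%Z -> ~ (q | h)%Z.
Proof. intros Hh Hd. apply Z.divide_pos_le in Hd; lia. Qed.

Lemma not_prime_divide_inv_mul q h v winv : prime q -> (1 <= h <= q - 1)%Z ->
  ((4 * v * winv) mod q = 1)%Z -> ~ (q | winv * h)%Z.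
Proof.
  intros Hp Hh Hw Hd. pose proof (prime_ge_2 q Hp).
  apply prime_mult in Hd as [Hd|Hd]; auto.
  - rewrite (proj2 (Z.mod_divide _ q ltac:(lia))) in Hw; [discriminate|].
    apply Z.divide_mul_r. auto.
  - apply (not_prime_divide_between q h); auto.
Qed.

Definition twisted_W (q h k winv a : Z) (S : Z -> bool) (z : Z) : C :=
  if Wset q h k winv S (z mod q) then emod q (z * a) else 0%C.

Lemma twisted_W_periodic q h k winv a S y : (0 < q)%Z ->
  twisted_W q h k winv a S y = twisted_W q h k winv a S (y mod q).
Proof.
  intros Hq. unfold twisted_W. rewrite Z.mod_mod by lia. destruct (Wset _ _ _ _ _ _); auto.
  apply emod_congr; [lia|]. apply Z.cong_iff_0. rewrite Z.mul_mod_idemp_l by lia. reflexivity.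
Qed.

Lemma Cmod_twisted_W_le q h k winv a S y : Cmod (twisted_W q h k winv a S y) <= 1.
Proof.
  unfold twisted_W. destruct (Wset _ _ _ _ _ _); [rewrite Cmod_emod | rewrite Cmod_0]; lra.
Qed.

Lemma e_abs_W_interval q h k winv a S N H : (0 <= N)%Z -> (N + H <= q - 1)%Z ->
  e_abs (filter (Wset q h k winv S) (zrange (N + 1) (N + H))) (IZR a / IZR q)
  = Cmod (csum (zrange (N + 1) (N + H)) (twisted_W q h k winv a S)).
Proof.
  intros HN HNH. rewrite e_abs_csum, csum_filter. f_equal. apply csum_ext.
  intros x Hx. apply zrange_In in Hx. unfold twisted_W. rewrite Z.mod_small by lia. reflexivity.
Qed.

(* [W] is the image of [S] under the affine bijection [s |-> winv h s + k], so the Fourier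
   coefficient at [b] is [f_S'] at [c = winv (a + b) mod q] up to a unimodular factor. *)
Lemma Cmod_fourier_twisted_W q h k v winv a S b c : prime q -> (1 <= h <= q - 1)%Z ->
  ((4 * v * winv) mod q = 1)%Z -> ((winv * (a + b) - c) mod q = 0)%Z ->
  Cmod (fourier q (twisted_W q h k winv a S) b)
  = e_abs (setZ q (dilate q h S)) (IZR c / IZR q).
Proof.
  intros Hp Hh Hw Hc. pose proof (prime_ge_2 q Hp). assert (Hq0 : (q <> 0)%Z) by lia.
  unfold fourier.
  rewrite (csum_ext _ _ (fun y => if Wset q h k winv S y then emod q (y * (a + b)) else 0%C)).
  2:{ intros y Hy. apply zrange_In in Hy. unfold twisted_W. rewrite Z.mod_small by lia.
      destruct (Wset _ _ _ _ _ _); [rewrite <- emod_add; f_equal|]; ring. }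
  rewrite <- csum_filter. unfold Wset.
  rewrite csum_affine_image by (eauto using not_prime_divide_inv_mul).
  rewrite (csum_ext _ _ (fun s => emod q (k * (a + b)) * emod q (h * s * c))%C).
  2:{ intros s _. rewrite <- emod_add. apply emod_congr; auto.
      apply Z.mod_divide in Hc as [t Ht]; auto. apply Z.mod_divide; auto.
      rewrite Z.mod_eq by auto.
      exists (h * s * t - (winv * h * s + k) / q * (a + b))%Z.
      replace c with (winv * (a + b) - t * q)%Z by lia. ring. }
  rewrite csum_scal, Cmod_mult, Cmod_emod, Rmult_1_l, e_abs_csum. unfold setZ at 1, dilate.
  rewrite (csum_image q (setZ q S) (fun s => (h * s) mod q)%Z).
  - f_equal. apply csum_ext. intros s _. apply emod_congr; auto.
    rewrite Zminus_mod, Z.mul_mod_idemp_l, <- Zminus_mod, Z.sub_diag by auto.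
    apply Z.mod_0_l; auto.
  - apply setZ_NoDup.
  - intros x _. pose proof (Z.mod_pos_bound (h * x) q). lia.
  - intros x y Hx Hy Hxy. apply setZ_In in Hx, Hy.
    apply (affine_mod_inj q h 0); try tauto; auto using not_prime_divide_between.
    rewrite !Z.add_0_r. auto.
Qed.

Definition centered_mod (q x : Z) : Z :=
  if (2 * (x mod q) <=? q)%Z then x mod q else (x mod q - q)%Z.

Lemma centered_mod_spec q x : (0 < q)%Z ->
  (2 * Z.abs (centered_mod q x) <= q)%Z /\ ((x - centered_mod q x) mod q = 0)%Z.
Proof.
  intros Hq. pose proof (Z.mod_pos_bound x q Hq). pose proof (Z.mod_eq x q ltac:(lia)).
  unfold centered_mod. destruct (Z.leb_spec (2 * (x mod q)) q); split; try lia;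
    apply Z.mod_divide; try lia; [exists (x / q)%Z | exists (x / q + 1)%Z]; lia.
Qed.

Lemma pow3_le_reg x y : 0 <= x -> 0 <= y -> y ^ 3 <= x ^ 3 -> y <= x.
Proof.
  intros Hx Hy H. destruct (Rle_dec y x) as [|Hyx]; auto.
  apply Rnot_le_lt in Hyx. assert (x * x <= y * y) by nra.
  assert (0 < y * y) by nra.
  assert (x * (x * x) < y * (y * y)) by nra. simpl in H. lra.
Qed.

Lemma Rpower_one_third_cube y : 0 < y -> Rpower y (1 / 3) ^ 3 = y.
Proof.
  intros Hy. rewrite <- Rpower_pow, Rpower_mult by apply exp_pos.
  replace (1 / 3 * INR 3) with 1 by (simpl; field). apply Rpower_1; auto.
Qed.

Lemma Rpower_mult_nat x t k : 0 < x -> Rpower x (t * INR k) = Rpower x t ^ k.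
Proof. intros Hx. rewrite <- Rpower_mult, Rpower_pow by apply exp_pos. reflexivity. Qed.

Lemma freq_away_from_integers P Q qR v t s u :
  6 <= qR -> 3 <= Q -> P = Q ^ 4 -> P <= qR -> 1 <= v < Q ->
  Rabs t < 1 / P -> 5 * v / P <= Rabs u <= 1 / 2 -> Rabs (u - s) <= 1 / (2 * qR) ->
  1 / (2 * P) <= Rabs (4 * v * t - s) <= 1 - 1 / (2 * P).
Proof.
  intros Hq HQ HP HPq Hv Ht Hu Hus.
  assert (HQ2 : 9 <= Q * Q) by nra.
  assert (HP81 : 81 <= P) by (rewrite HP; replace (Q ^ 4) with ((Q * Q) * (Q * Q)) by ring; nra).
  assert (Hs1 : Rabs u - 1 / (2 * qR) <= Rabs s).
  { pose proof (Rabs_triang (u - s) s). replace (u - s + s) with u in H by ring. lra. }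
  assert (Hs2 : Rabs s <= 1 / 2 + 1 / (2 * qR)).
  { pose proof (Rabs_triang (s - u) u). replace (s - u + u) with s in H by ring.
    rewrite Rabs_minus_sym in H. lra. }
  assert (H4 : Rabs (4 * v * t) <= 4 * v / P).
  { rewrite Rabs_mult, (Rabs_right (4 * v)) by lra. unfold Rdiv.
    apply Rmult_le_compat_l; [lra|]. unfold Rdiv in Ht. lra. }
  assert (H4v : 4 * v / P <= 4 / 27).
  { apply (Rle_trans _ (4 * / (Q * Q * Q))).
    - rewrite HP. replace (Q ^ 4) with (Q * (Q * Q * Q)) by ring. unfold Rdiv.
      rewrite Rinv_mult, <- Rmult_assoc. apply Rmult_le_compat_r.
      + apply Rlt_le, Rinv_0_lt_compat. nra.
      + apply (Rmult_le_reg_r Q); [lra|]. rewrite Rmult_assoc, Rinv_l by lra. nra.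
    - apply Rmult_le_compat_l; [lra|]. apply Rinv_le_contravar; [lra | nra]. }
  assert (1 / P <= v / P) by (apply Rmult_le_compat_r; [apply Rlt_le, Rinv_0_lt_compat|]; lra).
  assert (5 * v / P = 4 * v / P + v / P) by (field; lra).
  assert (1 / P = 1 / (2 * P) + 1 / (2 * P)) by (field; lra).
  assert (1 / (2 * P) <= 1 / 162) by (apply Rmult_le_compat_l; [|apply Rinv_le_contravar]; lra).
  assert (1 / (2 * qR) <= 1 / (2 * P))
    by (apply Rmult_le_compat_l; [|apply Rinv_le_contravar]; lra).
  assert (1 / (2 * qR) <= 1 / 12) by (apply Rmult_le_compat_l; [|apply Rinv_le_contravar]; lra).
  split.
  - pose proof (Rabs_triang_inv s (4 * v * t)). rewrite <- Rabs_Ropp.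
    replace (- (4 * v * t - s)) with (s - 4 * v * t) by ring. lra.
  - pose proof (Rabs_triang (4 * v * t) (- s)) as Htr. rewrite Rabs_Ropp in Htr.
    unfold Rminus. lra.
Qed.

(* The three error terms of [Cmod_csum_short_interval_le] with [tau = eps n],
   [lam = 2 eps n / X], [K = 4 P / 3] and [L] close to [X / 2]. *)
Lemma three_terms_lt n qR Hr eps rho P X L :
  0 < rho -> 0 < eps <= 1 / 16 -> 0 < qR -> rho * qR <= n -> 1 <= Hr -> 0 < P ->
  X ^ 3 = n ^ 3 * (eps * Hr / (rho * qR)) -> 4 <= X -> 8 * P / (3 * eps * rho) <= X ->
  X / 4 <= L <= X / 2 ->
  2 * (L - 1) + eps * n * (2 * (eps * n) / X * Hr + L / (2 * (eps * n) / X)) / (2 * L)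
    + 4 * P / 3 * qR / (eps * n) < 2 * X.
Proof.
  intros Hrho Heps Hq Hn HH HP HX3 HX4 HXP HL.
  assert (Hn0 : 0 < n) by nra.
  assert (E1 : eps * n * (2 * (eps * n) / X * Hr + L / (2 * (eps * n) / X)) / (2 * L)
               = (eps * n) ^ 2 * Hr / (X * L) + X / 4)
    by (field; repeat split; nra).
  assert (E2 : (eps * n) ^ 2 * Hr / (X * L) <= X / 4).
  { apply (Rle_trans _ (4 * (eps * n) ^ 2 * Hr / X ^ 2)).
    - replace (4 * (eps * n) ^ 2 * Hr / X ^ 2) with ((eps * n) ^ 2 * Hr / (X * (X / 4)))
        by (field; lra).
      unfold Rdiv. apply Rmult_le_compat_l; [apply Rmult_le_pos; [apply pow2_ge_0 | lra]|].
      apply Rinv_le_contravar; [nra|]. apply Rmult_le_compat_l; lra.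
    - replace (4 * (eps * n) ^ 2 * Hr / X ^ 2) with (4 * eps * X * (rho * qR / n))
        by (rewrite <- (Rmult_1_r (4 * _ * _)), <- (Rinv_r (X ^ 3)), HX3 at 1 by nra;
            field; repeat split; nra).
      assert (rho * qR / n <= 1) by (apply (Rmult_le_reg_r n); [|field_simplify]; lra).
      assert (0 <= rho * qR / n)
        by (apply Rmult_le_pos; [nra | apply Rlt_le, Rinv_0_lt_compat; lra]).
      assert (4 * eps * X * (rho * qR / n) <= 4 * eps * X * 1)
        by (apply Rmult_le_compat_l; [nra | lra]).
      nra. }
  assert (E3 : 4 * P / 3 * qR / (eps * n) <= X / 2).
  { apply (Rle_trans _ (4 * P / (3 * eps * rho))); [|lra].
    replace (4 * P / 3 * qR / (eps * n)) with (4 * P / (3 * eps * rho) * (rho * qR / n))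
      by (field; repeat split; lra).
    rewrite <- (Rmult_1_r (4 * P / (3 * eps * rho))) at 2.
    apply Rmult_le_compat_l; [apply Rlt_le, Rdiv_lt_0_compat; nra|].
    apply (Rmult_le_reg_r n); [|field_simplify]; lra. }
  lra.
Qed.

Lemma inverse_congr q w winv x c : (q <> 0)%Z -> ((w * winv) mod q = 1)%Z ->
  ((winv * x - c) mod q = 0)%Z -> ((x - w * c) mod q = 0)%Z.
Proof.
  intros Hq Hw Hc. apply Z.mod_divide in Hc as [t Ht]; auto. apply Z.mod_divide; auto.
  pose proof (Z.mod_eq (w * winv) q Hq) as Hj. rewrite Hw in Hj.
  exists (w * t - x * (w * winv / q))%Z.
  replace c with (winv * x - t * q)%Z by lia.
  transitivity (x * (1 - w * winv) + w * t * q)%Z; [ring|]. rewrite Hj. ring.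
Qed.

Definition large_modulus (rho eps qR : R) : Prop :=
  6 <= qR /\ 3 <= Rpower qR (rho * eps ^ 2 / 4) /\ 64 <= rho ^ 2 * eps * qR /\
  (8 / (3 * eps * rho)) ^ 3 <= rho ^ 2 * eps * qR.

Lemma large_modulus_eventually rho eps : 0 < rho -> 0 < eps ->
  exists q0 : Z, forall q : Z, (q >= q0)%Z -> large_modulus rho eps (IZR q).
Proof.
  intros Hrho Heps. set (th := rho * eps ^ 2). set (c := rho ^ 2 * eps).
  assert (Hth : 0 < th) by (apply Rmult_lt_0_compat; [|apply pow_lt]; lra).
  assert (Hc : 0 < c) by (apply Rmult_lt_0_compat; [apply pow_lt|]; lra).
  set (B1 := 64 / c). set (B2 := (8 / (3 * eps * rho)) ^ 3 / c). set (B3 := exp (4 * ln 3 / th)).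
  assert (0 <= B1) by (apply Rlt_le, Rdiv_lt_0_compat; lra).
  assert (0 <= B2) by (apply Rlt_le, Rdiv_lt_0_compat; [apply pow_lt, Rdiv_lt_0_compat|]; nra).
  assert (0 < B3) by apply exp_pos.
  exists (up (6 + B1 + B2 + B3)). intros q Hq.
  destruct (archimed (6 + B1 + B2 + B3)) as [Hup _].
  apply Z.ge_le, IZR_le in Hq. set (qR := IZR q) in *.
  unfold large_modulus. fold th c. repeat split; try lra.
  - apply (Rle_trans _ (Rpower B3 (th / 4))).
    + unfold Rpower, B3. rewrite ln_exp.
      replace (th / 4 * (4 * ln 3 / th)) with (ln 3) by (field; lra).
      rewrite exp_ln; lra.
    + apply Rle_Rpower_l; lra.
  - assert (c * B1 = 64) by (unfold B1; field; lra).
    assert (c * B1 <= c * qR) by (apply Rmult_le_compat_l; lra). lra.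
  - assert (c * B2 = (8 / (3 * eps * rho)) ^ 3) by (unfold B2; field; lra).
    assert (c * B2 <= c * qR) by (apply Rmult_le_compat_l; lra). lra.
Qed.

Lemma cardZ_le q S : (0 <= q)%Z -> IZR (cardZ q S) <= IZR q.
Proof.
  intros Hq. unfold cardZ, setZ. apply IZR_le.
  pose proof (filter_length_le S (zrange 0 (q - 1))). rewrite zrange_length in H. lia.
Qed.

Section FixedLargeModulus.

Variables (rho eps : R) (q : Z) (S : Z -> bool) (h k v winv : Z) (u : R) (a N H : Z).
Hypothesis Hrho : 0 < rho < 1.
Hypothesis Heps : 0 < eps <= rho.
Hypothesis Heps16 : eps <= 1 / 16.
Hypothesis Hq : large_modulus rho eps (IZR q).
Hypothesis Hprime : prime q.
Hypothesis HS : IZR (cardZ q S) >= rho * IZR q.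
Hypothesis Hh : (1 <= h <= q - 1)%Z.
Hypothesis large_spectrum_small : forall a : Z, (2 * Z.abs a <= q)%Z ->
  e_abs (setZ q (dilate q h S)) (IZR a / IZR q) > eps * IZR (cardZ q S) ->
  IZR (Z.abs a) < Rpower (IZR q) (1 - rho * eps ^ 2).
Hypothesis Hv : (1 <= v)%Z.
Hypothesis Hv_small : IZR v < Rpower (IZR q) (rho * eps ^ 2 / 4).
Hypothesis Hwinv : ((4 * v * winv) mod q = 1)%Z.
Hypothesis Hu : 5 * IZR v * Rpower (IZR q) (- (rho * eps ^ 2)) <= Rabs u <= 1 / 2.
Hypothesis Ha : Rabs (u - IZR a / IZR q) <= 1 / (2 * IZR q).
Hypotheses (HN : (0 <= N)%Z) (HH : (1 <= H)%Z) (HNH : (N + H <= q - 1)%Z).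

Let n := IZR (cardZ q S).
Let P := Rpower (IZR q) (rho * eps ^ 2).
Let Q := Rpower (IZR q) (rho * eps ^ 2 / 4).

Lemma modulus_power_bounds : (6 <= q)%Z /\ 3 <= Q /\ P = Q ^ 4 /\ P ^ 3 <= IZR q.
Proof.
  destruct Hq as [Hq6 [HQ _]].
  assert (Hth : rho * eps ^ 2 <= 1 / 256) by (simpl; nra).
  assert (Hq0 : 0 < IZR q) by lra.
  repeat split; auto.
  - apply le_IZR. lra.
  - unfold P, Q. rewrite <- Rpower_mult_nat by lra. f_equal. simpl. field.
  - unfold P. rewrite <- Rpower_mult_nat by lra. rewrite <- (Rpower_1 (IZR q)) at 2 by lra.
    apply Rle_Rpower; [lra|]. simpl. nra.
Qed.

Lemma large_coefficient_geom_sum_le b : (0 <= b <= q - 1)%Z ->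
  eps * n < Cmod (fourier q (twisted_W q h k winv a S) b) ->
  Cmod (geom_sum q (N + 1) (N + H) b) <= 4 * P / 3.
Proof.
  intros Hb Hbig. destruct modulus_power_bounds as [Hq6 [HQ [HPQ HP3]]].
  assert (Hq' : 6 <= IZR q) by (apply IZR_le; lia).
  assert (HP0 : 0 < P) by apply exp_pos.
  assert (HP81 : 81 <= P) by (rewrite HPQ; assert (9 <= Q * Q) by nra;
                              replace (Q ^ 4) with ((Q * Q) * (Q * Q)) by ring; nra).
  set (c := centered_mod q (winv * (a + b))).
  destruct (centered_mod_spec q (winv * (a + b)) ltac:(lia)) as [Hc2 Hc].
  fold c in Hc2, Hc.
  rewrite (Cmod_fourier_twisted_W q h k v winv a S b c) in Hbig by auto.
  pose proof (large_spectrum_small c Hc2 ltac:(unfold n in Hbig; lra)) as Hsmall.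
  replace (Rpower (IZR q) (1 - rho * eps ^ 2)) with (IZR q / P) in Hsmall
    by (unfold P, Rminus; rewrite Rpower_plus, Rpower_Ropp, Rpower_1 by lra; reflexivity).
  rewrite abs_IZR in Hsmall.
  assert (Hcq : Rabs (IZR c / IZR q) < 1 / P).
  { unfold Rdiv.
    rewrite Rabs_mult, (Rabs_right (/ IZR q)) by (apply Rle_ge, Rlt_le, Rinv_0_lt_compat; lra).
    apply (Rmult_lt_reg_r (IZR q)); [lra|]. field_simplify; lra. }
  rewrite Rpower_Ropp in Hu. fold P in Hu.
  assert (HP3q : P <= IZR q) by (assert (P <= P ^ 3) by (simpl; nra); lra).
  pose proof (freq_away_from_integers P Q (IZR q) (IZR v) (IZR c / IZR q) (IZR a / IZR q) u
    Hq' HQ HPQ HP3q ltac:(split; [apply IZR_le; lia | auto]) Hcq ltac:(unfold Rdiv in *; lra) Ha)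
    as Hfar.
  replace (4 * IZR v * (IZR c / IZR q) - IZR a / IZR q) with (IZR (4 * v * c - a) / IZR q)
    in Hfar by (rewrite minus_IZR, !mult_IZR; field; lra).
  replace (4 * P / 3) with (2 / (3 * (1 / (2 * P)))) by (field; lra).
  apply (Cmod_geom_sum_le q _ _ b (4 * v * c - a)); auto; [lia | | split].
  - replace (b - (4 * v * c - a))%Z with ((a + b) - (4 * v) * c)%Z by ring.
    apply (inverse_congr q (4 * v) winv); auto; lia.
  - apply Rdiv_lt_0_compat; lra.
  - apply (Rmult_le_reg_r (2 * P)); [lra|]. field_simplify; lra.
Qed.

Let X := n * Rpower (eps * IZR H / (rho * IZR q)) (1 / 3).

Lemma cube_root_scale_bounds :
  X ^ 3 = n ^ 3 * (eps * IZR H / (rho * IZR q)) /\ 4 <= X /\ 8 * P / (3 * eps * rho) <= X /\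
  X <= n.
Proof.
  destruct modulus_power_bounds as [Hq6 [HQ [HPQ HP3]]].
  destruct Hq as [_ [_ [H64 H8]]].
  assert (Hq' : 6 <= IZR q) by (apply IZR_le; lia).
  assert (HH1 : 1 <= IZR H) by (apply IZR_le; lia).
  assert (HHq : IZR H <= IZR q) by (apply IZR_le; lia).
  assert (Hn : rho * IZR q <= n) by (unfold n; lra).
  assert (Hy : 0 < eps * IZR H / (rho * IZR q)) by (apply Rdiv_lt_0_compat; nra).
  assert (HX3 : X ^ 3 = n ^ 3 * (eps * IZR H / (rho * IZR q)))
    by (unfold X; rewrite Rpow_mult_distr, Rpower_one_third_cube; auto).
  assert (HX0 : 0 <= X) by (unfold X; apply Rmult_le_pos; [nra | apply Rlt_le, exp_pos]).
  assert (Hlow : rho ^ 2 * eps * IZR q ^ 2 <= X ^ 3).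
  { rewrite HX3.
    assert ((rho * IZR q) ^ 3 <= n ^ 3) by (apply pow_incr; nra).
    assert (eps / (rho * IZR q) <= eps * IZR H / (rho * IZR q))
      by (unfold Rdiv; apply Rmult_le_compat_r; [apply Rlt_le, Rinv_0_lt_compat|]; nra).
    apply (Rle_trans _ ((rho * IZR q) ^ 3 * (eps / (rho * IZR q)))).
    - right. field. nra.
    - apply Rmult_le_compat; try lra; [apply pow_le | apply Rlt_le, Rdiv_lt_0_compat]; nra. }
  repeat split; auto.
  - apply pow3_le_reg; [lra | lra |].
    assert (rho ^ 2 * eps * IZR q ^ 2 = (rho ^ 2 * eps * IZR q) * IZR q) by ring.
    assert (64 * 1 <= (rho ^ 2 * eps * IZR q) * IZR q) by (apply Rmult_le_compat; lra).
    replace (4 ^ 3) with 64 by ring. lra.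
  - assert (0 < P) by apply exp_pos.
    apply pow3_le_reg; [lra | apply Rlt_le, Rdiv_lt_0_compat; nra |].
    replace ((8 * P / (3 * eps * rho)) ^ 3) with ((8 / (3 * eps * rho)) ^ 3 * P ^ 3)
      by (field; lra).
    apply (Rle_trans _ ((8 / (3 * eps * rho)) ^ 3 * IZR q)).
    + apply Rmult_le_compat_l; auto. apply pow_le, Rlt_le, Rdiv_lt_0_compat; nra.
    + apply (Rle_trans _ (rho ^ 2 * eps * IZR q * IZR q)); [|simpl in *; nra].
      apply Rmult_le_compat_r; lra.
  - apply pow3_le_reg; [nra | lra |]. rewrite HX3.
    rewrite <- (Rmult_1_r (n ^ 3)) at 2. apply Rmult_le_compat_l; [apply pow_le; nra|].
    apply (Rmult_le_reg_r (rho * IZR q)); [nra|]. field_simplify; nra.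
Qed.

Lemma W_interval_sum_lt :
  e_abs (filter (Wset q h k winv S) (zrange (N + 1) (N + H))) (IZR a / IZR q)
    < 2 * n * Rpower (eps * IZR H / (rho * IZR q)) (1 / 3).
Proof.
  destruct modulus_power_bounds as [Hq6 [HQ [HPQ HP3]]].
  destruct cube_root_scale_bounds as [HX3 [HX4 [HXP HXn]]].
  assert (Hnq : n <= IZR q) by (apply cardZ_le; lia).
  set (L := (up (X / 2) - 1)%Z).
  destruct (archimed (X / 2)) as [Hup1 Hup2].
  assert (HL : X / 2 - 1 < IZR L <= X / 2) by (unfold L; rewrite minus_IZR; lra).
  assert (HLq : (1 <= L <= q)%Z) by (split; apply le_IZR; lra).
  assert (HP0 : 0 < P) by apply exp_pos.
  assert (Hn0 : 0 < n) by (assert (6 <= IZR q) by (apply IZR_le; lia); unfold n; nra).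
  rewrite e_abs_W_interval by auto.
  eapply Rle_lt_trans.
  - apply (Cmod_csum_short_interval_le q _ (N + 1) (N + H) L (eps * n) (4 * P / 3)
             (2 * (eps * n) / X)); try lia.
    + intros y. apply twisted_W_periodic. lia.
    + apply Cmod_twisted_W_le.
    + apply Rmult_lt_0_compat; lra.
    + lra.
    + apply Rdiv_lt_0_compat; nra.
    + apply large_coefficient_geom_sum_le.
  - replace (N + H - (N + 1) + 1)%Z with H by ring.
    replace (2 * n * _) with (2 * X) by (unfold X; ring).
    apply three_terms_lt with (rho := rho); auto; try (unfold n; lra).
    apply IZR_le; lia.
Qed.

End FixedLargeModulus.

Theorem lemma4 (rho1 : R) (Hrho : 0 < rho1 < 1) :
  exists eps0 : R, 0 < eps0 < 1 /\
  forall eps : R, 0 < eps < eps0 ->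
  exists q0 : Z,
  forall q : Z, prime q -> (q >= q0)%Z ->
  forall S : Z -> bool, IZR (cardZ q S) >= rho1 * IZR q ->
  forall h : Z, (1 <= h <= q - 1)%Z ->
  (forall a : Z, (2 * Z.abs a <= q)%Z ->
     e_abs (setZ q (dilate q h S)) (IZR a / IZR q) > eps * IZR (cardZ q S) ->
     IZR (Z.abs a) < Rpower (IZR q) (1 - rho1 * eps ^ 2)) ->
  forall k v : Z, (1 <= v)%Z -> IZR v < Rpower (IZR q) (rho1 * eps ^ 2 / 4) ->
  forall winv : Z, ((4 * v * winv) mod q = 1)%Z ->
  forall u : R,
    5 * IZR v * Rpower (IZR q) (- (rho1 * eps ^ 2)) <= Rabs u <= 1 / 2 ->
  forall a : Z, Rabs (u - IZR a / IZR q) <= 1 / (2 * IZR q) ->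
  forall N H : Z, (0 <= N)%Z -> (1 <= H)%Z -> (N + H <= q - 1)%Z ->
  e_abs (filter (Wset q h k winv S) (zrange (N + 1) (N + H))) (IZR a / IZR q)
    < 2 * IZR (cardZ q S) * Rpower (eps * IZR H / (rho1 * IZR q)) (1 / 3).
Proof.
  exists (Rmin rho1 (1 / 16)).
  pose proof (Rmin_l rho1 (1 / 16)) as Hmin_rho. pose proof (Rmin_r rho1 (1 / 16)) as Hmin_16.
  split; [split; [apply Rmin_glb_lt|]; lra|].
  intros eps Heps.
  destruct (large_modulus_eventually rho1 eps) as [q0 Hq0]; try lra.
  exists q0. intros q Hp Hqq S HS h Hh Hspec k v Hv Hv_small winv Hw u Hu a Ha N H HN HH HNH.
  apply (W_interval_sum_lt rho1 eps q S h k v winv u); auto; lra.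
Qed.
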